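(* There exist absolute constants $c>0$ and $n_0$ such that the following holds for every $n\ge n_0$ that is a power of $2$. Let $L=\log_2 n$ and let $T_1,\dots,T_n$ be drawn independently and uniformly at random from the $L$-element subsets of $[n]$. For $x\in\{0,1\}^n$ let $N_T(x) := \#\{ i\in[n] : x_j = 1 \text{ for all } j\in T_i\}$. Then $\mathbb{E}_{T_1,\dots,T_n}\Big[\Pr_{\mathbf{x}\sim\{0,1\}^n}[N_T(\mathbf{x}) = 1]\Big] \ge c$, where $\mathbf{x}$ is uniform on $\{0,1\}^n$. In particular, there exists a choice of $T_1,\dots,T_n$ with $\Pr_{\mathbf{x}}[N_T(\mathbf{x})=1]\ge c$. *)

From mathcomp Require Import all_boot all_order all_algebra.
Set Implicit Arguments. Unset Strict Implicit. Unset Printing Implicit Defensive.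
Import Order.TTheory GRing.Theory Num.Theory.
Local Open Scope ring_scope.

Definition NT (n : nat) (T : {ffun 'I_n -> {set 'I_n}}) (x : {ffun 'I_n -> bool}) : nat :=
  #|[set i : 'I_n | [forall j in T i, x j]]|.

(* All families (T_1,...,T_n) of L-element subsets of [n]; drawing the T_i
   independently and uniformly = drawing a family uniformly from this set. *)
Definition families (n L : nat) : {set {ffun 'I_n -> {set 'I_n}}} :=
  [set T : {ffun 'I_n -> {set 'I_n}} | [forall i, #|T i| == L]].

Definition probN1 (n : nat) (T : {ffun 'I_n -> {set 'I_n}}) : rat :=
  (#|[set x : {ffun 'I_n -> bool} | NT T x == 1%N]|)%:R / (2 ^ n)%:R.

Definition expectN1 (n L : nat) : rat :=
  (\sum_(T in families n L) probN1 T) / (#|families n L|)%:R.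

(* For a fixed x of weight k, the events [T_i \subset ones x] are independent,
   each of probability p = C(k, L) / C(n, L), so a uniform family T has
   N_T(x) = 1 with probability n p (1 - p)^(n - 1).  Since n = 2^L, the ratio
   p = k^_L / n^_L is within a factor 2 of 1/n as soon as n/2 <= k <= n/2 + n/(4L),
   and then n p (1 - p)^(n - 1) >= 1/32.  By symmetry half of all x have k >= n/2,
   and by Chebyshev (the weight has variance n/4) at most a quarter have
   k > n/2 + n/(4L) once 16 L^2 <= n.  Averaging over x gives 1/128. *)

From mathcomp Require Import all_boot all_order all_algebra.
From mathcomp Require Import lra ring zify.
Import Order.TTheory GRing.Theory Num.Theory.
Set Implicit Arguments. Unset Strict Implicit. Unset Printing Implicit Defensive.
Local Open Scope ring_scope.

Lemma sum_indicator (T : finType) (A : {pred T}) : (\sum_i (i \in A : nat))%N = #|A|.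
Proof. by rewrite -sum1_card [RHS]big_mkcond; apply: eq_bigr => i _; case: (i \in A). Qed.

Lemma sum_card_exchange (I J : finType) (A : {pred I}) (P : I -> J -> bool) :
  (\sum_(i in A) #|[set j | P i j]| = \sum_j #|[set i in A | P i j]|)%N.
Proof.
under eq_bigr => i _ do rewrite -sum_indicator.
rewrite exchange_big /=; apply: eq_bigr => j _.
rewrite -sum_indicator big_mkcond /=; apply: eq_bigr => i _; rewrite !inE.
by case: (i \in A).
Qed.

Lemma card_eq1_sum (I : finType) (P : pred I) :
  (#|[set i | P i]| == 1%N) = (\sum_i0 [forall i, P i == (i == i0)])%N :> nat.
Proof.
have [/cards1P[i1 P_i1] | not1] := boolP (#|[set i | P i]| == 1%N).
  have P_eq i : P i = (i == i1).
    by have := congr1 (fun A : {set I} => i \in A) P_i1; rewrite !inE.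
  rewrite (bigD1 i1) //= big1 ?addn0; first by rewrite (introT forallP) // => i; rewrite P_eq.
  move=> i0 ne_i0; apply/eqP; rewrite eqb0; apply/forallP => /(_ i1).
  by rewrite P_eq eqxx [i1 == i0]eq_sym (negbTE ne_i0).
rewrite big1 // => i0 _; apply/eqP; rewrite eqb0; apply: contra not1 => /forallP P_eq.
by apply/cards1P; exists i0; apply/setP => i; rewrite !inE (eqP (P_eq i)).
Qed.

Lemma exists_ge_average (R : realFieldType) (T : finType) (A : {set T}) (f : T -> R) c :
  (0 < #|A|)%N -> c <= (\sum_(i in A) f i) / #|A|%:R -> exists2 i, i \in A & c <= f i.
Proof.
move=> A_gt0 avg.
have [/exists_inP[i iA le_ci] | /exists_inP none] := boolP [exists i in A, c <= f i].
  by exists i.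
have [i0 i0A] := card_gt0P A_gt0.
have : \sum_(i in A) f i < \sum_(i in A) c.
  apply: ltr_sum; first by apply/hasP; exists i0; rewrite ?mem_index_enum.
  by move=> i iA; rewrite ltNge; apply/negP => le_ci; apply: none; exists i.
rewrite sumr_const -mulr_natr; move: avg; rewrite ler_pdivlMr ?ltr0n //; lra.
Qed.

Section PowerBounds.
Variable R : realFieldType.
Implicit Types y z p : R.

Lemma bernoulli_ineq y m : -1 <= y -> 1 + m%:R * y <= (1 + y) ^+ m.
Proof.
move=> y_ge; elim: m => [|m IHm]; first by rewrite mul0r addr0 expr0.
have y1_ge0 : 0 <= 1 + y by lra.
have : (1 + m%:R * y) * (1 + y) <= (1 + y) ^+ m * (1 + y) by rewrite ler_wpM2r.
have : 0 <= m%:R * (y * y) by rewrite mulr_ge0 // -expr2 sqr_ge0.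
rewrite exprSr -natr1; nra.
Qed.

Lemma expr1B_ge_half y m : 0 <= y -> 2 * m%:R * y <= 1 -> 1 / 2 <= (1 - y) ^+ m.
Proof.
case: m => [|m] y_ge0 small; first by rewrite expr0; lra.
have m_ge1 : 1 <= (m.+1%:R : R) by rewrite ler1n.
have := @bernoulli_ineq (- y) m.+1; nra.
Qed.

Lemma expr1D_le2 z m : 0 <= z -> 2 * m%:R * z <= 1 -> (1 + z) ^+ m <= 2.
Proof.
case: m => [|m] z_ge0 small; first by rewrite expr0; lra.
have m_ge1 : 1 <= (m.+1%:R : R) by rewrite ler1n.
have z_le1 : z <= 1 by nra.
have half_le := expr1B_ge_half z_ge0 small.
have : (1 + z) ^+ m.+1 * (1 - z) ^+ m.+1 <= 1.
  by rewrite -exprMn exprn_ile1 //; nra.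
have : 0 <= (1 + z) ^+ m.+1 by rewrite exprn_ge0 //; lra.
nra.
Qed.

(* Divisibility by [4] lets [(1 - p) ^+ N] be bounded below as the fourth power
   of [(1 - p) ^+ (N %/ 4) >= 1/2]. *)
Lemma exactly_one_prob_ge p N : (4 %| N)%N -> 0 <= p ->
  1 <= 2 * N%:R * p -> N%:R * p <= 2 -> 1 / 32 <= N%:R * p * (1 - p) ^+ N.-1.
Proof.
move=> /dvdnP[m ->] p_ge0 p_lo p_hi.
have N_gt0 : (0 < m * 4)%N.
  by rewrite lt0n; apply/eqP => N0; move: p_lo; rewrite N0 mulr0 mul0r; lra.
have m_ge1 : 1 <= (m%:R : R) by rewrite ler1n -(ltn_pmul2r (isT : (0 < 4)%N)).
have p_le1 : p <= 1 by move: p_hi; rewrite natrM; nra.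
have half_le : 1 / 2 <= (1 - p) ^+ m by apply: expr1B_ge_half; move: p_hi; rewrite natrM; lra.
have sixteenth_le : 1 / 16 <= (1 - p) ^+ (m * 4).
  rewrite exprM (_ : 1 / 16 = (1 / 2) ^+ 4); last by rewrite !exprS expr0; lra.
  by rewrite lerXn2r ?nnegrE //; lra.
have drop_one : (1 - p) ^+ (m * 4) <= (1 - p) ^+ (m * 4).-1.
  rewrite -[in X in X <= _](prednK N_gt0) exprS.
  by rewrite ler_piMl ?exprn_ge0 //; lra.
nra.
Qed.

End PowerBounds.

Lemma exactly_one_count_ge a b N : (4 %| N)%N -> (0 < a)%N -> (a <= b)%N ->
    (b <= 2 * N * a)%N -> (N * a <= 2 * b)%N ->
  (b ^ N <= 32 * (N * a * (b - a) ^ N.-1))%N.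
Proof.
move=> N_div a_gt0 le_ab b_lo b_hi.
have b_gt0 : (0 < b)%N by apply: leq_trans le_ab.
have N_gt0 : (0 < N)%N.
  by move: b_lo; case: (posnP N) => [->|//]; rewrite muln0 mul0n leqNgt b_gt0.
have br_gt0 : (0 < b%:R :> rat) by rewrite ltr0n.
set p : rat := a%:R / b%:R.
have a_def : a%:R = p * b%:R by rewrite mulfVK ?gt_eqF.
have prob : 1 / 32 <= N%:R * p * (1 - p) ^+ N.-1.
  apply: exactly_one_prob_ge => //; first by rewrite divr_ge0.
    by rewrite /p mulrA ler_pdivlMr // mul1r -!natrM ler_nat.
  by rewrite /p mulrA ler_pdivrMr // -!natrM ler_nat.
have count_def : (N * a * (b - a) ^ N.-1)%:R
    = b%:R ^+ N * (N%:R * p * (1 - p) ^+ N.-1) :> rat.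
  rewrite natrM natrX natrB // a_def (_ : b%:R - p * b%:R = b%:R * (1 - p)); last by ring.
  by rewrite exprMn -[X in b%:R ^+ X](prednK N_gt0) exprS !natrM a_def; ring.
rewrite -(@ler_nat rat) natrM natrX count_def mulrCA.
by apply: ler_peMr; [rewrite exprn_ge0 | lra].
Qed.

Section FallingFactorials.
Local Open Scope nat_scope.
Implicit Types k n L : nat.

Lemma expn_prod_ord n L : n ^ L = \prod_(i < L) n.
Proof. by rewrite prod_nat_const card_ord. Qed.

Lemma leq_expn2r m n e : m <= n -> m ^ e <= n ^ e.
Proof. by move=> le_mn; elim: e => // e IHe; rewrite !expnS leq_mul. Qed.

Lemma ffact_le_expn n L : n ^_ L <= n ^ L.
Proof.
rewrite ffact_prod expn_prod_ord.
by apply: leq_prod => i _; rewrite leq_subr.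
Qed.

Lemma expn_subn_le_ffact n L : (n - L) ^ L <= n ^_ L.
Proof.
rewrite ffact_prod expn_prod_ord.
by apply: leq_prod => i _; rewrite leq_sub2l // ltnW.
Qed.

Lemma ffact_mul_expn_le k n L : k <= n -> k ^_ L * n ^ L <= k ^ L * n ^_ L.
Proof.
move=> le_kn; rewrite !ffact_prod !expn_prod_ord -!big_split /=.
by apply: leq_prod => i _; nia.
Qed.

Lemma leq_16sqr_exp2 L : 12 <= L -> 16 * L ^ 2 <= 2 ^ L.
Proof.
elim: L => [|L IHL] //; rewrite leq_eqVlt => /orP[/eqP <- // | L_ge].
have := IHL L_ge; rewrite expnS !expnSr !expn0 !mul1n; move: (2 ^ L) => t.
have : 32 * L + 16 <= 16 * (L * L) by nia.
lia.
Qed.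

(* From here on [n = 2 ^ L]: then [n * x ^ L = (2 * x) ^ L], which turns ratios
   of falling factorials into powers of numbers close to [1]. *)
Lemma ffact_le_mul_ffact k n L : n = 2 ^ L -> 4 * L ^ 2 <= n -> n <= 2 * k ->
  n ^_ L <= 2 * n * k ^_ L.
Proof.
move=> n_def small le_n2k.
have n_gt0 : 0 < n by rewrite n_def expn_gt0.
have key : n ^ L <= 2 * (n - 2 * L) ^ L.
  rewrite -(@ler_nat rat) natrM !natrX natrB; last by nia.
  have nr_gt0 : (0 < n%:R :> rat)%R by rewrite ltr0n.
  have -> : (n%:R - (2 * L)%:R = n%:R * (1 - (2 * L)%:R / n%:R) :> rat)%R.
    by field; rewrite gt_eqF.
  rewrite exprMn -[X in (X <= _)%R]mulr1 mulrCA ler_pM2l ?exprn_gt0 //.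
  have : (1 / 2 <= (1 - (2 * L)%:R / n%:R) ^+ L :> rat)%R.
    apply: expr1B_ge_half; first by rewrite divr_ge0.
    rewrite mulrA ler_pdivrMr // mul1r -!natrM ler_nat; nia.
  lra.
apply: leq_trans (ffact_le_expn n L) _; apply: leq_trans key _.
rewrite -mulnA leq_mul2l /=.
apply: leq_trans (leq_mul (leqnn n) (expn_subn_le_ffact k L)).
rewrite {2}n_def -expnMn; apply: leq_expn2r; nia.
Qed.

Lemma mul_ffact_le_ffact k n L : n = 2 ^ L -> k <= n -> 2 * L * (2 * k - n) <= n ->
  n * k ^_ L <= 2 * n ^_ L.
Proof.
move=> n_def le_kn close.
have n_gt0 : 0 < n by rewrite n_def expn_gt0.
have key : (2 * k) ^ L <= 2 * n ^ L.
  case: (leqP (2 * k) n) => [le_2kn | lt_n2k].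
    exact: leq_trans (leq_expn2r L le_2kn) (leq_pmull _ _).
  rewrite -(@ler_nat rat) natrM !natrX.
  have nr_gt0 : (0 < n%:R :> rat)%R by rewrite ltr0n.
  have -> : ((2 * k)%:R = n%:R * (1 + (2 * k - n)%:R / n%:R) :> rat)%R.
    by rewrite natrB 1?ltnW //; field; rewrite gt_eqF.
  rewrite exprMn mulrC ler_pM2r ?exprn_gt0 //.
  apply: expr1D_le2; first by rewrite divr_ge0.
  by rewrite mulrA ler_pdivrMr // mul1r -!natrM ler_nat.
have nL_gt0 : 0 < n ^ L by rewrite expn_gt0 n_gt0.
rewrite -(leq_pmul2r nL_gt0) -mulnA.
apply: leq_trans (leq_mul (leqnn n) (ffact_mul_expn_le L le_kn)) _.
by rewrite mulnA {1}n_def -expnMn mulnAC leq_mul2r key orbT.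
Qed.

End FallingFactorials.

Definition ones n (x : {ffun 'I_n -> bool}) : {set 'I_n} := [set j | x j].
Definition weight n (x : {ffun 'I_n -> bool}) : nat := #|ones x|.
Definition draws (T : finType) (A : {set T}) (L : nat) : {set {set T}} :=
  [set B : {set T} | B \subset A & #|B| == L].

Lemma card_draws_in (T : finType) (A : {set T}) L : #|draws A L| = 'C(#|A|, L).
Proof. exact: cards_draws. Qed.

Section ExactlyOneCount.
Local Open Scope nat_scope.
Variables (n L : nat) (x : {ffun 'I_n -> bool}).
Let full := draws [set: 'I_n] L.
Let good := draws (ones x) L.
Let exactly_at (i0 : 'I_n) (i : 'I_n) := if i == i0 then good else full :\: good.

Lemma NT_ones T : NT T x = #|[set i | T i \subset ones x]|.
Proof.
apply: eq_card => i; rewrite !inE.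
by apply/forall_inP/subsetP => sub_x j /sub_x; rewrite ?inE.
Qed.

Lemma card_families : #|families n L| = 'C(n, L) ^ n.
Proof.
have -> : 'C(n, L) = #|full| by rewrite card_draws_in cardsT card_ord.
rewrite -[X in _ ^ X](card_ord n) -card_ffun_on; apply: eq_card => T; rewrite !inE.
by apply/forallP/ffun_onP => T_L i; move: (T_L i); rewrite !inE subsetT.
Qed.

(* Split the [T] with [NT T x = 1] by the unique [i0] with [T i0 \subset ones x]. *)
Lemma card_families_NT_eq1 :
  #|[set T in families n L | NT T x == 1]| =
  n * 'C(weight x, L) * ('C(n, L) - 'C(weight x, L)) ^ n.-1.
Proof.
have good_full : good \subset full by apply/subsetP => B; rewrite !inE subsetT => /andP[_ ->].
have split_T T : (T \in [set T in families n L | NT T x == 1] : nat)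
    = \sum_i0 (T \in family (exactly_at i0) : nat).
  rewrite !inE NT_ones.
  have [/forallP T_L | /forallPn [i T_i]] := boolP [forall i, #|T i| == L].
    rewrite card_eq1_sum.
    apply: eq_bigr => i0 _; congr nat_of_bool; apply/forallP/familyP => T_eq i;
      move: (T_eq i); rewrite /exactly_at /good /full;
      case: (i == i0); rewrite !inE T_L ?subsetT ?andbT; by case: (T i \subset _).
  rewrite big1 // => i0 _; apply/eqP; rewrite eqb0; apply/familyP => /(_ i).
  by rewrite /exactly_at /good /full; case: (i == i0); rewrite !inE (negbTE T_i) ?andbF.
rewrite -sum_indicator (eq_bigr _ (fun T _ => split_T T)) exchange_big /=.
rewrite (eq_bigr (fun=> 'C(weight x, L) * ('C(n, L) - 'C(weight x, L)) ^ n.-1)).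
  by rewrite sum_nat_const card_ord mulnA.
move=> i0 _; rewrite sum_indicator card_family foldrE big_map big_enum /=.
rewrite (bigD1 i0) //= /exactly_at eqxx card_draws_in; congr (_ * _).
rewrite (eq_bigr (fun=> 'C(n, L) - 'C(weight x, L))); last first.
  by move=> i /negbTE ->; rewrite cardsDS // !card_draws_in cardsT card_ord.
by rewrite prod_nat_const cardC1 card_ord.
Qed.

End ExactlyOneCount.

Lemma card_bool_ffun n : #|{ffun 'I_n -> bool}| = (2 ^ n)%N.
Proof. by rewrite card_ffun card_bool card_ord. Qed.

Definition flip n (j : 'I_n) (x : {ffun 'I_n -> bool}) : {ffun 'I_n -> bool} :=
  [ffun i => (i == j) (+) x i].

Lemma flipK n (j : 'I_n) : involutive (flip j).
Proof. by move=> x; apply/ffunP => i; rewrite !ffunE addbA addbb. Qed.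

Definition negx n (x : {ffun 'I_n -> bool}) : {ffun 'I_n -> bool} := [ffun i => ~~ x i].

Lemma negxK n : involutive (@negx n).
Proof. by move=> x; apply/ffunP => i; rewrite !ffunE negbK. Qed.

Lemma weight_negx n (x : {ffun 'I_n -> bool}) : weight (negx x) = (n - weight x)%N.
Proof.
rewrite /weight (_ : ones (negx x) = ~: ones x).
  by rewrite [LHS]cardsCs setCK card_ord.
by apply/setP => i; rewrite !inE ffunE.
Qed.

Section WeightMoments.
Variables (R : realFieldType) (n : nat).
Implicit Types x : {ffun 'I_n -> bool}.

Lemma sum_signs x : \sum_i (-1) ^+ x i = n%:R - (2 * weight x)%:R :> R.
Proof.
rewrite /weight -sum_indicator natrM natr_sum mulr_sumr.
have -> : n%:R = \sum_(i < n) (1 : R) by rewrite sumr_const card_ord.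
by rewrite -sumrB; apply: eq_bigr => i _; rewrite inE; case: (x i) => /=; lra.
Qed.

(* Flipping coordinate [j] is a sign-reversing involution. *)
Lemma sum_sign_mul_sign (i j : 'I_n) : i != j ->
  \sum_(x : {ffun 'I_n -> bool}) (-1) ^+ x i * (-1) ^+ x j = 0 :> R.
Proof.
move=> ne_ij; set S := (\sum_x _).
suff : S = - S by lra.
rewrite {1}/S (reindex_inj (inv_inj (@flipK n j))) -sumrN; apply: eq_bigr => x _.
by rewrite !ffunE eqxx (negbTE ne_ij); case: (x i); case: (x j) => /=; lra.
Qed.

Lemma sum_sqr_weight_dev :
  \sum_(x : {ffun 'I_n -> bool}) (n%:R - (2 * weight x)%:R) ^+ 2 = (n * 2 ^ n)%:R :> R.
Proof.
under eq_bigr => x _ do rewrite -sum_signs expr2 big_distrlr /=.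
rewrite exchange_big (eq_bigr (fun=> (2 ^ n)%:R)) => [|i _].
  by rewrite sumr_const card_ord natrM mulr_natl.
rewrite exchange_big (bigD1 i) //= [X in _ + X]big1 ?addr0 => [|j ne_ji]; last first.
  by rewrite sum_sign_mul_sign // eq_sym.
rewrite (eq_bigr (fun=> 1)) => [|x _]; last by case: (x i); rewrite /= ?expr1; lra.
by rewrite sumr_const card_bool_ffun.
Qed.

End WeightMoments.

Section WeightConcentration.
Local Open Scope nat_scope.
Variable n : nat.

Lemma sum_sqr_weight_excess_le :
  \sum_(x : {ffun 'I_n -> bool}) (2 * weight x - n) ^ 2 <= n * 2 ^ n.
Proof.
rewrite -(@ler_nat rat) natr_sum -(sum_sqr_weight_dev rat n).
apply: ler_sum => x _; rewrite natrX.
have [le_n2k | /ltnW le_2kn] := leqP n (2 * weight x).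
  by rewrite natrB // -sqrrN opprB.
by move: le_2kn; rewrite -subn_eq0 => /eqP ->; rewrite expr0n sqr_ge0.
Qed.

Lemma half_le_card_weight_ge :
  2 ^ n <= 2 * #|[set x : {ffun 'I_n -> bool} | n <= 2 * weight x]|.
Proof.
set heavy := [set x : {ffun 'I_n -> bool} | n <= 2 * weight x].
have heavy_light : #|heavy| + #|~: heavy| = 2 ^ n by rewrite cardsC card_bool_ffun.
have : (@negx n @: ~: heavy) \subset heavy.
  apply/subsetP => y /imsetP[x]; rewrite !inE -ltnNge => light ->.
  by rewrite weight_negx; lia.
move/subset_leq_card; rewrite card_imset; last exact: inv_inj (@negxK n).
lia.
Qed.

Lemma card_weight_excess_ge c d :
  c * #|[set x : {ffun 'I_n -> bool} | c <= d * (2 * weight x - n) ^ 2]|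
    <= d * (n * 2 ^ n).
Proof.
set A := [set x | _].
apply: (@leq_trans (\sum_(x in A) d * (2 * weight x - n) ^ 2)).
  by rewrite mulnC -sum_nat_const; apply: leq_sum => x; rewrite inE.
apply: (@leq_trans (\sum_(x : {ffun 'I_n -> bool}) d * (2 * weight x - n) ^ 2)).
  by rewrite [X in _ <= X](bigID (mem A)) leq_addr.
by rewrite -big_distrr leq_mul2l sum_sqr_weight_excess_le orbT.
Qed.

End WeightConcentration.

Definition balanced n L (x : {ffun 'I_n -> bool}) :=
  (n <= 2 * weight x)%N && (2 * L * (2 * weight x - n) <= n)%N.

Lemma card_balanced_ge n L : (0 < n)%N -> (16 * L ^ 2 <= n)%N ->
  (2 ^ n <= 4 * #|[set x : {ffun 'I_n -> bool} | balanced L x]|)%N.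
Proof.
move=> n_gt0 small.
set bad := [set x : {ffun 'I_n -> bool} | n ^ 2 <= 4 * L ^ 2 * (2 * weight x - n) ^ 2]%N.
have heavy_split : [set x : {ffun 'I_n -> bool} | n <= 2 * weight x]%N
    \subset [set x | balanced L x] :|: bad.
  apply/subsetP => x; rewrite !inE /balanced => -> /=.
  have [//|/ltnW far] := leqP (2 * L * (2 * weight x - n)) n.
  rewrite /= (_ : 4 * L ^ 2 * _ = (2 * L * (2 * weight x - n)) ^ 2)%N; last by ring.
  exact: leq_expn2r.
have bad_small : (4 * #|bad| <= 2 ^ n)%N.
  have markov := card_weight_excess_ge n (n ^ 2) (4 * L ^ 2).
  rewrite -(@leq_pmul2l (n * n)) ?muln_gt0 ?n_gt0 //.
  rewrite (_ : n * n * _ = 4 * (n ^ 2 * #|bad|))%N; last by ring.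
  apply: leq_trans (leq_mul (leqnn 4) markov) _.
  rewrite (_ : 4 * _ = 16 * L ^ 2 * n * 2 ^ n)%N; last by ring.
  exact: leq_mul (leq_mul small (leqnn n)) (leqnn _).
have heavy_le := leq_trans (subset_leq_card heavy_split) (leq_card_setU _ _).
have heavy_half := half_le_card_weight_ge n.
move: heavy_le heavy_half bad_small.
move: (2 ^ n)%N #|bad| #|[set x : {ffun 'I_n -> bool} | n <= 2 * weight x]%N|
  #|[set x | balanced L x]| => N b h g le_h le_N le_b.
clear -le_h le_N le_b; lia.
Qed.

Lemma card_families_NT_eq1_ge n L (x : {ffun 'I_n -> bool}) :
    n = (2 ^ L)%N -> (2 <= L)%N -> (16 * L ^ 2 <= n)%N -> balanced L x ->
  ('C(n, L) ^ n <= 32 * #|[set T in families n L | NT T x == 1%N]|)%N.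
Proof.
move=> n_def L_ge2 small /andP[heavy close].
have le_kn : (weight x <= n)%N by rewrite -[X in (_ <= X)%N](card_ord n) max_card.
have le_Lk : (L <= weight x)%N by nia.
have L_fact_gt0 := fact_gt0 L.
rewrite card_families_NT_eq1; apply: exactly_one_count_ge.
- by rewrite n_def -(subnKC L_ge2) expnD dvdn_mulr.
- by rewrite bin_gt0.
- exact: leq_bin2l.
- rewrite -(leq_pmul2r L_fact_gt0) -mulnA !bin_ffact.
  by apply: ffact_le_mul_ffact; nia.
- by rewrite -(leq_pmul2r L_fact_gt0) -!mulnA !bin_ffact mul_ffact_le_ffact.
Qed.

Lemma expectN1_E n L : expectN1 n L =
  (\sum_(x : {ffun 'I_n -> bool}) #|[set T in families n L | NT T x == 1%N]|)%:R
    / (2 ^ n * 'C(n, L) ^ n)%:R.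
Proof.
rewrite /expectN1 /probN1 -mulr_suml -natr_sum sum_card_exchange card_families.
by rewrite natrM invfM mulrA.
Qed.

Lemma sum_card_NT_eq1_ge n L : (12 <= L)%N -> n = (2 ^ L)%N ->
  (2 ^ n * 'C(n, L) ^ n
     <= 128 * \sum_(x : {ffun 'I_n -> bool}) #|[set T in families n L | NT T x == 1%N]|)%N.
Proof.
move=> L_ge n_def.
have small : (16 * L ^ 2 <= n)%N by rewrite n_def leq_16sqr_exp2.
have n_gt0 : (0 < n)%N by rewrite n_def expn_gt0.
set bal := [set x : {ffun 'I_n -> bool} | balanced L x].
apply: leq_trans (leq_mul (card_balanced_ge n_gt0 small) (leqnn _)) _.
rewrite mulnAC mulnC -sum_nat_const big_distrr /=.
apply: (@leq_trans (\sum_(x in bal) 128 * #|[set T in families n L | NT T x == 1%N]|)).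
  apply: leq_sum => x; rewrite inE => x_bal.
  rewrite (_ : 128 = 4 * 32)%N // -mulnA leq_mul2l /=.
  by apply: card_families_NT_eq1_ge => //; apply: leq_trans L_ge.
by rewrite [X in (_ <= X)%N](bigID (mem bal)) leq_addr.
Qed.

Lemma expectN1_ge n L : (12 <= L)%N -> n = (2 ^ L)%N -> 1 / 128 <= expectN1 n L.
Proof.
move=> L_ge n_def; have Ln : (L <= n)%N by rewrite n_def ltnW // ltn_expl.
have D_gt0 : 0 < (2 ^ n * 'C(n, L) ^ n)%:R :> rat.
  by rewrite ltr0n muln_gt0 !expn_gt0 bin_gt0 Ln.
have r128_gt0 : 0 < 128 :> rat by rewrite ltr0n.
rewrite expectN1_E (ler_pdivlMr _ _ D_gt0) mul1r (ler_pdivrMl _ _ r128_gt0).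
by rewrite -natrM ler_nat; apply: sum_card_NT_eq1_ge.
Qed.

Theorem mainTheorem3 :
  exists c : rat, 0 < c /\
  exists n0 : nat, forall n L : nat, (n0 <= n)%N -> n = (2 ^ L)%N ->
    c <= expectN1 n L /\
    exists T, T \in families n L /\ c <= probN1 T.
Proof.
exists (1 / 128); split; first by rewrite divr_gt0 ?ltr0n.
exists (2 ^ 12)%N => n L n_ge n_def.
have L_ge : (12 <= L)%N by rewrite -(leq_exp2l _ _ (isT : (1 < 2)%N)) -n_def.
have Ln : (L <= n)%N by rewrite n_def ltnW // ltn_expl.
have families_gt0 : (0 < #|families n L|)%N by rewrite card_families expn_gt0 bin_gt0 Ln.
have avg := expectN1_ge L_ge n_def; split; first exact: avg.
have [T T_fam T_ge] := exists_ge_average families_gt0 avg.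
by exists T; exact: conj T_fam T_ge.
Qed.
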